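(* Suppose $N$ carries a graded complementation and $X$ is a Macaulay basis of $M$. Then for every $m\in N$ there is exactly one $m'\in N$ such that $m\Rightarrow_X^* m'$ and $m'$ is reduced with respect to $\Rightarrow_X$. Moreover this $m'$ satisfies $m'_b\in N_b\ominus W_b(X)$ for every $b\in B$.
   Context: Standing setup. $\mathbf{k}$ is a field. $(A,+,0)$ is a finitely generated, cancellative commutative monoid with a total order $\le$ which is a well-order, such that $0<a$ for every $a\neq0$ and $a\le a'$ implies $a+c\le a'+c$. $R=\bigoplus_{a\in A}R_a$ is a commutative Noetherian $\mathbf{k}$-algebra graded by $A$. $B$ is a well-ordered totally ordered set with an action $(a,b)\mapsto a\cdot b$ of $A$ such that $0\cdot b=b$, $(a+a')\cdot b=a\cdot(a'\cdot b)$, monotone and cancellative in each argument. $N=\bigoplus_{b\in B}N_b$ is a Noetherian $R$-module graded by $B$ ($R_aN_b\subseteq N_{a\cdot b}$), $M\subseteq N$ an $R$-submodule. For $m=\sum_b m_b\ne0$: $\deg m=\max\{b:m_b\ne0\}$, $\operatorname{lf}(m)=m_{\deg m}$; homogeneous means lying in one graded piece (also for $R$). A finite set $X=\{m_1,\dots,m_n\}$ of nonzero elements of $M$ is a Macaulay basis of $M$ if the $R$-submodule generated by $\{\operatorname{lf}(p):0\ne p\in M\}$ equals that generated by $\operatorname{lf}(m_1),\dots,\operatorname{lf}(m_n)$. $W_b(X)=\operatorname{span}_{\mathbf{k}}\{r\operatorname{lf}(x): x\in X,\ r\in R\text{ homogeneous},\ r\operatorname{lf}(x)\in N_b\}\subseteq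 N_b$. A graded complementation on $N$ assigns to each $b$ and each subspace $W\le N_b$ a subspace $W^c\le N_b$ with $W\oplus W^c=N_b$; $U\ominus W:=U\cap W^c$. Relation: $m\Rightarrow_X m'$ iff $\{b: m_b\notin W_b(X)^c\}$ is nonempty with maximum $b$, and $m'=m-\sum_j r_jx_j$ with $x_j\in X$, $r_j\in R$ homogeneous, $r_j\operatorname{lf}(x_j)\in N_b$, and $m_b-\sum_j r_j\operatorname{lf}(x_j)\in W_b(X)^c$. $\Rightarrow_X^*$ is the reflexive–transitive closure; $m$ is reduced w.r.t. $\Rightarrow_X$ if no $m'$ satisfies $m\Rightarrow_X m'$. *)

From HB Require Import structures.
From mathcomp Require Import all_boot all_order all_algebra.
From Stdlib Require List.
Set Implicit Arguments.
Unset Strict Implicit.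
Unset Printing Implicit Defensive.
Import GRing.Theory.
Local Open Scope ring_scope.

Record well_order (T : Type) (le : T -> T -> Prop) : Prop := {
  wo_refl : forall x, le x x;
  wo_antisym : forall x y, le x y -> le y x -> x = y;
  wo_trans : forall x y z, le x y -> le y z -> le x z;
  wo_total : forall x y, le x y \/ le y x;
  wo_min : forall P : T -> Prop, (exists x, P x) ->
           exists x, P x /\ forall y, P y -> le x y }.

Record ordered_monoid (A : Type) (add : A -> A -> A) (zero : A)
    (le : A -> A -> Prop) : Prop := {
  om_assoc : forall a b c, add a (add b c) = add (add a b) c;
  om_comm : forall a b, add a b = add b a;
  om_zero : forall a, add zero a = a;
  om_cancel : forall a b c, add a c = add b c -> a = b;
  om_fingen : exists gens : seq A, forall a, exists s : seq A,
      (forall g, List.In g s -> List.In g gens) /\ a = foldr add zero s;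
  om_wo : well_order le;
  om_pos : forall a, a <> zero -> le zero a /\ zero <> a;
  om_mono : forall a a' c, le a a' -> le (add a c) (add a' c) }.

Record ordered_action (A B : Type) (add : A -> A -> A) (zero : A)
    (leA : A -> A -> Prop) (leB : B -> B -> Prop) (act : A -> B -> B) : Prop := {
  oa_wo : well_order leB;
  oa_zero : forall b, act zero b = b;
  oa_add : forall a a' b, act (add a a') b = act a (act a' b);
  oa_mono_l : forall a a' b, leA a a' -> leB (act a b) (act a' b);
  oa_mono_r : forall a b b', leB b b' -> leB (act a b) (act a b');
  oa_cancel_l : forall a a' b, act a b = act a' b -> a = a';
  oa_cancel_r : forall a b b', act a b = act a b' -> b = b' }.

Definition rspan (R : nzRingType) (V : lmodType R) (S : V -> Prop) (v : V) : Prop :=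
  exists s : seq (R * V), (forall p, List.In p s -> S p.2) /\
                          v = \sum_(p <- s) p.1 *: p.2.

Definition submodule (R : nzRingType) (V : lmodType R) (P : V -> Prop) : Prop :=
  P 0 /\ (forall u v, P u -> P v -> P (u + v)) /\
  (forall (r : R) v, P v -> P (r *: v)).

Definition noetherian (R : nzRingType) (V : lmodType R) : Prop :=
  forall P : V -> Prop, submodule P ->
    exists s : seq V, forall v, P v <-> rspan (fun w => List.In w s) v.

Definition kspan (k : fieldType) (R : comAlgType k) (V : lmodType R)
    (S : V -> Prop) (v : V) : Prop :=
  exists s : seq (k * V), (forall p, List.In p s -> S p.2) /\
                          v = \sum_(p <- s) (p.1%:A : R) *: p.2.

Definition ksubspace (k : fieldType) (R : comAlgType k) (V : lmodType R)
    (P : V -> Prop) : Prop :=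
  P 0 /\ (forall u v, P u -> P v -> P (u + v)) /\
  (forall (c : k) v, P v -> P ((c%:A : R) *: v)).

(* R = (+)_a R_a with R_a := {x | piR a x = x}, each R_a a k-subspace,
   R_a R_a' <= R_(a+a'). *)
Record ring_grading (k : fieldType) (R : comAlgType k) (A : Type)
    (add : A -> A -> A) (piR : A -> R -> R) : Prop := {
  rg_add : forall a x y, piR a (x + y) = piR a x + piR a y;
  rg_scale : forall a (c : k) x, piR a (c *: x) = c *: piR a x;
  rg_idem : forall a x, piR a (piR a x) = piR a x;
  rg_orth : forall a a' x, a <> a' -> piR a' (piR a x) = 0;
  rg_sum : forall x, exists s : seq A, List.NoDup s /\
      (forall a, piR a x <> 0 -> List.In a s) /\ x = \sum_(a <- s) piR a x;
  rg_mul : forall a a' x y, piR a x = x -> piR a' y = y ->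
      piR (add a a') (x * y) = x * y }.

(* N = (+)_b N_b with N_b := {v | piN b v = v}, each N_b a k-subspace,
   R_a N_b <= N_(a.b). *)
Record module_grading (k : fieldType) (R : comAlgType k) (A B : Type)
    (act : A -> B -> B) (piR : A -> R -> R) (N : lmodType R)
    (piN : B -> N -> N) : Prop := {
  mg_add : forall b u v, piN b (u + v) = piN b u + piN b v;
  mg_scale : forall b (c : k) v, piN b ((c%:A : R) *: v) = (c%:A : R) *: piN b v;
  mg_idem : forall b v, piN b (piN b v) = piN b v;
  mg_orth : forall b b' v, b <> b' -> piN b' (piN b v) = 0;
  mg_sum : forall v, exists s : seq B, List.NoDup s /\
      (forall b, piN b v <> 0 -> List.In b s) /\ v = \sum_(b <- s) piN b v;
  mg_mul : forall a b (r : R) v, piR a r = r -> piN b v = v ->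
      piN (act a b) (r *: v) = r *: v }.

Section Macaulay.
Variables (k : fieldType) (R : comAlgType k) (A B : Type).
Variable (leB : B -> B -> Prop).
Variable (piR : A -> R -> R).
Variables (N : lmodType R) (piN : B -> N -> N).

Definition homogR (r : R) : Prop := exists a, piR a r = r.

Definition is_deg (m : N) (b : B) : Prop :=
  piN b m <> 0 /\ forall b', piN b' m <> 0 -> leB b' b.

Definition is_lf (m l : N) : Prop := exists b, is_deg m b /\ l = piN b m.

Definition in_piece (b : B) (v : N) : Prop := piN b v = v.

Definition graded_complementation (cmp : B -> (N -> Prop) -> N -> Prop) : Prop :=
  forall b (W : N -> Prop), ksubspace W -> (forall v, W v -> in_piece b v) ->
    [/\ ksubspace (cmp b W), (forall v, cmp b W v -> in_piece b v),
        (forall v, W v -> cmp b W v -> v = 0) &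
        (forall v, in_piece b v -> exists w w', W w /\ cmp b W w' /\ v = w + w')].

Definition macaulay_basis (M : N -> Prop) (X : seq N) : Prop :=
  (forall x, List.In x X -> M x /\ x <> 0) /\
  (forall v, rspan (fun w => exists p, M p /\ p <> 0 /\ is_lf p w) v <->
             rspan (fun w => exists x, List.In x X /\ is_lf x w) v).

Definition Wgen (X : seq N) (b : B) (w : N) : Prop :=
  exists (x : N) (r : R) (l : N), List.In x X /\ homogR r /\ is_lf x l /\
    w = r *: l /\ in_piece b w.

Definition W (X : seq N) (b : B) : N -> Prop := kspan (Wgen X b).

Variable cmp : B -> (N -> Prop) -> N -> Prop.

Definition Wc (X : seq N) (b : B) : N -> Prop := cmp b (W X b).

Definition red_step (X : seq N) (m m' : N) : Prop :=
  exists b, ~ Wc X b (piN b m) /\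
    (forall b', ~ Wc X b' (piN b' m) -> leB b' b) /\
    exists s : seq (R * N * N),
      (forall p, List.In p s ->
         List.In p.1.2 X /\ homogR p.1.1 /\ is_lf p.1.2 p.2 /\
         in_piece b (p.1.1 *: p.2)) /\
      m' = m - \sum_(p <- s) p.1.1 *: p.1.2 /\
      Wc X b (piN b m - \sum_(p <- s) p.1.1 *: p.2).

Definition reduced (X : seq N) (m : N) : Prop := ~ exists m', red_step X m m'.

End Macaulay.

Inductive rtc (T : Type) (rel : T -> T -> Prop) : T -> T -> Prop :=
| rtc_refl : forall x, rtc rel x x
| rtc_step : forall x y z, rel x y -> rtc rel y z -> rtc rel x z.

(* Call m "normal" when every homogeneous component m_b lies in the chosen
   complement W_b(X)^c.  The proof has three parts.

   - Normal = reduced.  A reduction step needs a degree b with m_b outside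
     W_b(X)^c, so normal elements are reduced; conversely, if m is not normal,
     the largest such b exists (m has finite support) and the decomposition
     m_b = w + w' with w in W_b(X), w' in W_b(X)^c lets us subtract a lift of
     w built from homogeneous multiples of elements of X, which is a step.
   - Existence.  The lifted step leaves all components above b untouched and
     puts the b-component into W_b(X)^c, so the largest "bad" degree strictly
     decreases; well-founded induction on B gives a reachable normal form.
   - Uniqueness.  Every step subtracts an element of M, so two reachable
     normal forms differ by an element p of M which is again normal.  If
     p <> 0, its leading form lies in W_{deg p}(X) because X is a Macaulay
     basis, and also in the complement, hence is 0: contradiction. *)

From HB Require Import structures.
From mathcomp Require Import all_boot all_order all_algebra.
From Stdlib Require Import Classical.
Set Implicit Arguments.
Unset Strict Implicit.
Unset Printing Implicit Defensive.
Local Open Scope ring_scope.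
Import GRing.Theory.

Section KSubspaces.
Variables (k : fieldType) (R : comAlgType k) (V : lmodType R).

Lemma ksubspaceB (P : V -> Prop) : ksubspace P ->
  forall u v, P u -> P v -> P (u - v).
Proof.
move=> [_ [HD HZ]] u v Pu Pv; apply: HD => //.
by have := HZ (-1) v Pv; rewrite scaleNr scale1r scaleN1r.
Qed.

Lemma ksubspace_sum (I : Type) (P : V -> Prop) (s : seq I) (F : I -> V) :
  ksubspace P -> (forall i, List.In i s -> P (F i)) -> P (\sum_(i <- s) F i).
Proof.
move=> [P0 [HD _]]; elim: s => [|x s IH] Hs; first by rewrite big_nil.
rewrite big_cons; apply: HD; first by apply: Hs; left.
by apply: IH => i Hi; apply: Hs; right.
Qed.

Lemma submodule_ksubspace (P : V -> Prop) : submodule P -> ksubspace P.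
Proof. by move=> [P0 [HD HZ]]; split; [|split] => // c v; apply: HZ. Qed.

Lemma kspan_ksubspace (S : V -> Prop) : ksubspace (kspan S).
Proof.
split; first by exists [::]; rewrite big_nil.
split.
  move=> u v [s [Hs ->]] [t [Ht ->]]; exists (s ++ t); split; last by rewrite big_cat.
  by move=> p Hp; case: (List.in_app_or _ _ _ Hp) => [/Hs|/Ht].
move=> c v [s [Hs ->]]; exists [seq (c * p.1, p.2) | p <- s]; split.
  by move=> p Hp; have [q [<- /Hs]] := proj1 (List.in_map_iff _ _ _) Hp.
rewrite big_map scaler_sumr; apply: eq_bigr => p _.
by rewrite /= scalerA mulr_algl scalerA.
Qed.

Lemma kspan_gen (S : V -> Prop) v : S v -> kspan S v.
Proof.
move=> Sv; exists [:: (1, v)]; split; first by move=> p [<-|[]].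
by rewrite big_seq1 /= scale1r scale1r.
Qed.

End KSubspaces.

Section WellOrder.
Variables (T : Type) (le : T -> T -> Prop).
Hypothesis Hwo : well_order le.

Lemma well_order_ind (P : T -> Prop) :
  (forall x, (forall y, le y x -> y <> x -> P y) -> P x) -> forall x, P x.
Proof.
move=> IH x; apply: NNPP => nPx.
have [y [nPy ymin]] := wo_min Hwo (ex_intro (fun y => ~ P y) x nPx).
apply: nPy; apply: IH => z zy nzy; apply: NNPP => nPz.
by apply: nzy; apply: (wo_antisym Hwo zy); apply: ymin.
Qed.

Lemma finite_max (s : seq T) (P : T -> Prop) :
  (forall x, P x -> List.In x s) -> (exists x, P x) ->
  exists x, P x /\ forall y, P y -> le y x.
Proof.
elim: s P => [|x s IH] P HP [x0 Px0]; first by case: (HP _ Px0).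
case: (classic (exists y, P y /\ y <> x)) => [Hother|Honly]; last first.
  have Ex : forall y, P y -> y = x.
    by move=> y Py; apply: NNPP => nyx; apply: Honly; exists y.
  exists x; split; first by rewrite -(Ex _ Px0).
  by move=> y /Ex ->; exact: wo_refl Hwo x.
have [|z [[Pz nzx] zmax]] := IH (fun y => P y /\ y <> x) _ Hother.
  by move=> y [Py nyx]; case: (HP _ Py) => // E; case: nyx.
have zmax' y : P y -> y <> x -> le y z by move=> Py nyx; exact: zmax.
case: (classic (P x)) => Px; last first.
  by exists z; split => // y Py; apply: zmax' => // E; subst.
case: (wo_total Hwo x z) => [xz|zx].
  by exists z; split => // y Py; case: (classic (y = x)) => [->|]; auto.
exists x; split => // y Py; case: (classic (y = x)) => [->|nyx].
  exact: wo_refl Hwo x.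
exact: (wo_trans Hwo (zmax' y Py nyx) zx).
Qed.

End WellOrder.

Section GradedModule.
Variables (k : fieldType) (R : comAlgType k) (A B : Type).
Variables (addA : A -> A -> A) (leB : B -> B -> Prop) (act : A -> B -> B).
Variables (piR : A -> R -> R) (N : lmodType R) (piN : B -> N -> N).
Hypothesis HR : ring_grading addA piR.
Hypothesis HN : module_grading act piR piN.

Lemma piN0 b : piN b 0 = 0.
Proof. by apply: (@addrI _ (piN b 0)); rewrite -(mg_add HN) !addr0. Qed.

Lemma piNB b u v : piN b (u - v) = piN b u - piN b v.
Proof. by apply/eqP; rewrite eq_sym subr_eq -(mg_add HN) subrK. Qed.

Lemma piN_sum (I : Type) b (s : seq I) (F : I -> N) :
  piN b (\sum_(i <- s) F i) = \sum_(i <- s) piN b (F i).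
Proof.
elim: s => [|x s IH]; first by rewrite !big_nil piN0.
by rewrite !big_cons (mg_add HN) IH.
Qed.

Lemma piR0 a : piR a 0 = 0.
Proof. by apply: (@addrI _ (piR a 0)); rewrite -(rg_add HR) !addr0. Qed.

Lemma in_piece_ksubspace b : ksubspace (in_piece piN b).
Proof.
split; first exact: piN0.
split; first by move=> u v Hu Hv; rewrite /in_piece (mg_add HN) Hu Hv.
by move=> c v Hv; rewrite /in_piece (mg_scale HN) Hv.
Qed.

Lemma kspan_in_piece b (S : N -> Prop) v :
  (forall w, S w -> in_piece piN b w) -> kspan S v -> in_piece piN b v.
Proof.
move=> HS [s [Hs ->]]; apply: ksubspace_sum; first exact: in_piece_ksubspace.
move=> p /Hs /HS Hp; have [_ [_ HZ]] := in_piece_ksubspace b; exact: HZ.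
Qed.

Lemma finite_support v : exists s : seq B, forall b, piN b v <> 0 -> List.In b s.
Proof. by have [s [_ [Hs _]]] := mg_sum HN v; exists s. Qed.

Lemma support_scale a r y b : piR a r = r -> piN b (r *: y) <> 0 ->
  exists c, piN c y <> 0 /\ b = act a c.
Proof.
move=> Hr Hne; apply: NNPP => Hno; apply: Hne.
have [s [_ [_ ->]]] := mg_sum HN y.
rewrite scaler_sumr piN_sum big1 // => c _.
have Hc : piN (act a c) (r *: piN c y) = r *: piN c y.
  by apply: (mg_mul HN) => //; exact: (mg_idem HN).
case: (classic (b = act a c)) => [Eb|nEb]; last first.
  by rewrite -Hc (mg_orth HN) // => E; apply: nEb.
rewrite Eb Hc; case: (classic (piN c y = 0)) => [->|nz]; first by rewrite scaler0.
by case: Hno; exists c.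
Qed.

Hypothesis Hcan : forall a b b', act a b = act a b' -> b = b'.
Hypothesis Hmono : forall a b b', leB b b' -> leB (act a b) (act a b').

Lemma scale_leading_form b x a r l : piR a r = r -> is_lf leB piN x l ->
  in_piece piN b (r *: l) -> r *: l <> 0 ->
  piN b (r *: x) = r *: l /\ (forall b', piN b' (r *: x) <> 0 -> leB b' b).
Proof.
move=> Hr [d [[_ dmax] El]] Hb Hnz.
have Hd : piN (act a d) (r *: l) = r *: l.
  by apply: (mg_mul HN) => //; rewrite El; exact: (mg_idem HN).
have Eb : act a d = b.
  by apply: NNPP => nE; apply: Hnz; rewrite -Hb -Hd (mg_orth HN).
have Ex : r *: x = r *: l + r *: (x - l) by rewrite -scalerDr addrC subrK.
split.
  rewrite Ex (mg_add HN) Hb; suff -> : piN b (r *: (x - l)) = 0 by rewrite addr0.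
  apply: NNPP => Hne; have [c [Hc Ec]] := support_scale Hr Hne.
  move: Ec; rewrite -Eb => /Hcan Ec; subst c; apply: Hc.
  by rewrite piNB El (mg_idem HN) subrr.
move=> b' /(support_scale Hr) [c [Hc ->]]; rewrite -Eb; exact/Hmono/dmax.
Qed.

End GradedModule.

Section Reduction.
Variables (k : fieldType) (R : comAlgType k) (A B : Type).
Variables (addA : A -> A -> A) (leB : B -> B -> Prop) (act : A -> B -> B).
Variables (piR : A -> R -> R) (N : lmodType R) (piN : B -> N -> N).
Variable cmp : B -> (N -> Prop) -> N -> Prop.
Variables (M : N -> Prop) (X : seq N).
Hypothesis HR : ring_grading addA piR.
Hypothesis HN : module_grading act piR piN.
Hypothesis HwoB : well_order leB.
Hypothesis Hcan : forall a b b', act a b = act a b' -> b = b'.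
Hypothesis Hmono : forall a b b', leB b b' -> leB (act a b) (act a b').
Hypothesis HM : submodule M.
Hypothesis Hcmp : graded_complementation piN cmp.
Hypothesis HX : macaulay_basis leB piN M X.

Local Notation WX := (W leB piR piN X).
Local Notation WXc := (Wc leB piR piN cmp X).
Local Notation step := (red_step leB piR piN cmp X).
Local Notation reducedX := (reduced leB piR piN cmp X).

Definition normal (m : N) : Prop := forall b, WXc b (piN b m).

Definition admissible (b : B) (p : R * N * N) : Prop :=
  List.In p.1.2 X /\ homogR piR p.1.1 /\ is_lf leB piN p.1.2 p.2 /\
  in_piece piN b (p.1.1 *: p.2).

(* W_b(X) is spanned by elements of N_b, hence contained in N_b. *)
Lemma W_in_piece b v : WX b v -> in_piece piN b v.
Proof. by apply: (kspan_in_piece HN) => w [x [r [l [_ [_ [_ [_ Hw]]]]]]]. Qed.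

Lemma Wc_spec b :
  [/\ ksubspace (WXc b), (forall v, WXc b v -> in_piece piN b v),
      (forall v, WX b v -> WXc b v -> v = 0) &
      (forall v, in_piece piN b v -> exists w w', WX b w /\ WXc b w' /\ v = w + w')].
Proof. exact: Hcmp (kspan_ksubspace _) (@W_in_piece b). Qed.

(* In particular 0 is normal in every degree: bad degrees lie in the support. *)
Lemma Wc0 b : WXc b 0.
Proof. by case: (Wc_spec b) => [[]]. Qed.

Lemma top_bad_degree m : ~ normal m ->
  exists b, ~ WXc b (piN b m) /\ forall b', ~ WXc b' (piN b' m) -> leB b' b.
Proof.
move=> Hnn; have [s Hs] := finite_support HN m.
apply: (finite_max HwoB (s := s)).
  by move=> b Hb; apply: Hs => E; apply: Hb; rewrite E; exact: Wc0.
by apply: NNPP => Hno; apply: Hnn => b; apply: NNPP => Hb; apply: Hno; exists b.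
Qed.

(* A generator c v of W_b(X), v = r lf(x), lifts to the homogeneous multiple
   c r x, whose components vanish above b and whose b-component is c v. *)
Lemma Wgen_lift b (c : k) v : Wgen leB piR piN X b v ->
  exists p, [/\ admissible b p, p.1.1 *: p.2 = (c%:A : R) *: v,
    piN b (p.1.1 *: p.1.2) = p.1.1 *: p.2 &
    forall b', piN b' (p.1.1 *: p.1.2) <> 0 -> leB b' b].
Proof.
move=> [x [r [l [Xx [[a Ha] [Hl [-> Hb]]]]]]].
have Ecr : (c%:A * r) *: l = (c%:A : R) *: (r *: l) by rewrite scalerA.
have Hcr : piR a (c%:A * r) = c%:A * r by rewrite mulr_algl (rg_scale HR) Ha.
have Hbcr : in_piece piN b ((c%:A * r) *: l) by rewrite Ecr /in_piece (mg_scale HN) Hb.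
case: (classic ((c%:A * r) *: l = 0)) => Hz.
  exists (0, x, l); split => /=.
  - split => //; split; first by exists a; exact: (piR0 HR a).
    by split => //; rewrite /in_piece scale0r (piN0 HN).
  - by rewrite scale0r -Ecr.
  - by rewrite !scale0r (piN0 HN).
  - by move=> b'; rewrite scale0r (piN0 HN).
have [Hlead Hbelow] := scale_leading_form HN Hcan Hmono Hcr Hl Hbcr Hz.
by exists (c%:A * r, x, l); split => //; split; [|split; [exists a|]].
Qed.

Lemma W_lift b w : WX b w ->
  exists t : seq (R * N * N), [/\ forall p, List.In p t -> admissible b p,
    \sum_(p <- t) p.1.1 *: p.2 = w,
    piN b (\sum_(p <- t) p.1.1 *: p.1.2) = \sum_(p <- t) p.1.1 *: p.2 &
    forall b', piN b' (\sum_(p <- t) p.1.1 *: p.1.2) <> 0 -> leB b' b].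
Proof.
move=> [s [Hs ->]]; elim: s Hs => [|q s IH] Hs.
  by exists [::]; split => [//|||b']; rewrite !big_nil ?(piN0 HN).
have [|t [Ht Htw Htb Htbelow]] := IH; first by move=> p Hp; apply: Hs; right.
have [p [Hp Epq Hpb Hpbelow]] := Wgen_lift q.1 (Hs q (or_introl erefl)).
exists (p :: t); split.
- by move=> p' [<-|]; [exact: Hp|exact: Ht].
- by rewrite !big_cons Epq Htw.
- by rewrite !big_cons (mg_add HN) Hpb Htb.
- move=> b'; rewrite big_cons (mg_add HN) => Hne.
  case: (classic (piN b' (p.1.1 *: p.1.2) = 0)) => Hz; last exact: Hpbelow.
  by apply: Htbelow => E; apply: Hne; rewrite Hz E addr0.
Qed.

(* Reducing at the top bad degree b is always possible, and every bad degree
   of the result lies strictly below b: components above b are untouched and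
   the new b-component is the W_b(X)^c-part of m_b. *)
Lemma reduce_top m b : ~ WXc b (piN b m) ->
  (forall b', ~ WXc b' (piN b' m) -> leB b' b) ->
  exists m', step m m' /\ forall b', ~ WXc b' (piN b' m') -> leB b' b /\ b' <> b.
Proof.
move=> Hbad Hmax; have [_ _ _ Hdec] := Wc_spec b.
have [w [w' [Ww [Ww' Em]]]] := Hdec (piN b m) (mg_idem HN b m).
have [t [Ht Htw Htb Htbelow]] := W_lift Ww.
have Hrest : piN b m - \sum_(p <- t) p.1.1 *: p.2 = w'.
  by rewrite Htw Em addrC addKr.
exists (m - \sum_(p <- t) p.1.1 *: p.1.2); split.
  by exists b; do !split => //; exists t; rewrite Hrest.
move=> b' Hb'; rewrite (piNB HN) in Hb'.
case: (classic (leB b' b)) => Hle.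
  by split => // E; subst b'; apply: Hb'; rewrite Htb Hrest.
have Hzero : piN b' (\sum_(p <- t) p.1.1 *: p.1.2) = 0.
  by apply: NNPP => /Htbelow.
by case: Hle; apply: Hmax; rewrite Hzero subr0 in Hb'.
Qed.

Lemma normal_reduced m : normal m -> reducedX m.
Proof. by move=> Hn [m' [b [Hb _]]]; apply: Hb. Qed.

Lemma reduced_normal m : reducedX m -> normal m.
Proof.
move=> Hr; apply: NNPP => Hnn.
have [b [Hb Hmax]] := top_bad_degree Hnn.
by have [m' [Hstep _]] := reduce_top Hb Hmax; apply: Hr; exists m'.
Qed.

(* Existence: well-founded induction on the top bad degree. *)
Lemma normal_form_exists m : exists m', rtc step m m' /\ normal m'.
Proof.
have reach : forall b m, ~ WXc b (piN b m) ->
    (forall b', ~ WXc b' (piN b' m) -> leB b' b) ->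
    exists m', rtc step m m' /\ normal m'.
  apply: (well_order_ind HwoB) => b IH {}m Hb Hmax.
  have [m1 [Hstep Hlt]] := reduce_top Hb Hmax.
  case: (classic (normal m1)) => [Hn1|Hnn1].
    by exists m1; split => //; apply: rtc_step Hstep (rtc_refl _ _).
  have [b1 [Hb1 Hmax1]] := top_bad_degree Hnn1.
  have [Hle Hne] := Hlt _ Hb1.
  have [m' [Hrtc Hn']] := IH b1 Hle Hne m1 Hb1 Hmax1.
  by exists m'; split => //; apply: rtc_step Hstep Hrtc.
case: (classic (normal m)) => [Hn|Hnn].
  by exists m; split => //; apply: rtc_refl.
by have [b [Hb Hmax]] := top_bad_degree Hnn; apply: reach Hb Hmax.
Qed.

(* Each reduction subtracts an R-combination of elements of X, which lies in M. *)
Lemma step_in_M m m' : step m m' -> M (m - m').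
Proof.
move=> [b [_ [_ [s [Hs [-> _]]]]]]; rewrite opprB addrC subrK.
apply: ksubspace_sum => [|p /Hs [Xp _]]; first exact: submodule_ksubspace.
by case: HM => _ [_ HZ]; apply/HZ/(proj1 (proj1 HX _ Xp)).
Qed.

Lemma rtc_in_M m m' : rtc step m m' -> M (m - m').
Proof.
case: HM => M0 [MD _].
elim => [x|x y z /step_in_M Hxy _ Hyz]; first by rewrite subrr.
have -> : x - z = (x - y) + (y - z) by rewrite addrA subrK.
exact: MD.
Qed.

(* For l = lf(x) with x in X, every component of r l lies in W(X): expand r
   into homogeneous components. *)
Lemma lf_multiple_in_W d r l : (exists x, List.In x X /\ is_lf leB piN x l) ->
  WX d (piN d (r *: l)).
Proof.
move=> [x [Xx [e [He ->]]]].
have [s [_ [_ Er]]] := rg_sum HR r.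
rewrite Er scaler_suml (piN_sum HN); apply: ksubspace_sum; first exact: kspan_ksubspace.
move=> a _.
have Hv : piN (act a e) (piR a r *: piN e x) = piR a r *: piN e x.
  by apply: (mg_mul HN); [exact: (rg_idem HR)|exact: (mg_idem HN)].
case: (classic (act a e = d)) => E; last first.
  by rewrite -Hv (mg_orth HN) //; case: (kspan_ksubspace (Wgen leB piR piN X d)).
rewrite -E Hv; apply: kspan_gen; exists x, (piR a r), (piN e x).
by do !split => //; [exists a; exact: (rg_idem HR)|exists e].
Qed.

(* The key use of the Macaulay basis: a nonzero element of M has its leading
   form in W(X), so no nonzero element of M is normal. *)
Lemma normal_in_M_zero p : M p -> normal p -> p = 0.
Proof.
move=> Mp Hn; apply: NNPP => Hp.
have Hex : exists b, piN b p <> 0.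
  apply: NNPP => Hno; apply: Hp; have [s [_ [_ ->]]] := mg_sum HN p.
  by rewrite big1 // => b _; apply: NNPP => Hb; apply: Hno; exists b.
have [s Hs] := finite_support HN p.
have [d [Hd dmax]] := finite_max HwoB Hs Hex.
have Hlf : rspan (fun w => exists q, M q /\ q <> 0 /\ is_lf leB piN q w) (piN d p).
  exists [:: (1, piN d p)]; split; last by rewrite big_seq1 scale1r.
  by move=> q [<-|[]]; exists p; do !split => //; exists d.
have [u [Hu Eu]] := proj1 (proj2 HX (piN d p)) Hlf.
have HW : WX d (piN d p).
  rewrite -(mg_idem HN) Eu (piN_sum HN); apply: ksubspace_sum.
    exact: kspan_ksubspace.
  by move=> q /Hu; apply: lf_multiple_in_W.
by have [_ _ Hint _] := Wc_spec d; apply: Hd; apply: Hint.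
Qed.

(* Uniqueness: two reachable normal forms differ by a normal element of M. *)
Lemma normal_form_unique m m1 m2 : rtc step m m1 -> rtc step m m2 ->
  normal m1 -> normal m2 -> m1 = m2.
Proof.
move=> H1 H2 Hn1 Hn2; apply/eqP; rewrite -subr_eq0; apply/eqP.
apply: normal_in_M_zero.
  have := ksubspaceB (submodule_ksubspace HM) (rtc_in_M H2) (rtc_in_M H1).
  by rewrite opprB addrC addrA subrK.
move=> b; rewrite (piNB HN); have [Hks _ _ _] := Wc_spec b.
exact: ksubspaceB.
Qed.

End Reduction.

Theorem mainTheorem4
  (k : fieldType) (R : comAlgType k)
  (A : Type) (addA : A -> A -> A) (zeroA : A) (leA : A -> A -> Prop)
  (HA : ordered_monoid addA zeroA leA)
  (piR : A -> R -> R) (HR : ring_grading addA piR) (HRnoeth : noetherian R^o)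
  (B : Type) (leB : B -> B -> Prop) (act : A -> B -> B)
  (HB : ordered_action addA zeroA leA leB act)
  (N : lmodType R) (piN : B -> N -> N) (HN : module_grading act piR piN)
  (HNnoeth : noetherian N)
  (M : N -> Prop) (HM : submodule M)
  (cmp : B -> (N -> Prop) -> N -> Prop)
  (Hcmp : graded_complementation piN cmp)
  (X : seq N) (HX : macaulay_basis leB piN M X) :
  forall m : N, exists m' : N,
    (rtc (red_step leB piR piN cmp X) m m' /\ reduced leB piR piN cmp X m') /\
    (forall m'', rtc (red_step leB piR piN cmp X) m m'' ->
                 reduced leB piR piN cmp X m'' -> m'' = m') /\
    (forall b, in_piece piN b (piN b m') /\ Wc leB piR piN cmp X b (piN b m')).
Proof.
have HwoB := oa_wo HB; have Hcan := oa_cancel_r HB; have Hmono := oa_mono_r HB.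
move=> m.
have [m' [Hreach Hnormal]] := normal_form_exists X HR HN HwoB Hcan Hmono Hcmp m.
exists m'; split; first by split => //; apply: normal_reduced.
split => [m'' Hreach'' Hred''|b].
  have Hnormal'' := reduced_normal HR HN HwoB Hcan Hmono Hcmp Hred''.
  exact: (normal_form_unique HR HN HwoB HM Hcmp HX Hreach'' Hreach Hnormal'' Hnormal).
by split; [apply: (mg_idem HN) | apply: Hnormal].
Qed.
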